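(* Let $\varepsilon=\left(\begin{smallmatrix} -1&0\\ 0&1 \end{smallmatrix}\right)$, $S=\left(\begin{smallmatrix} 0&-1\\ 1&0 \end{smallmatrix}\right)$, $T=\left(\begin{smallmatrix} 1&1\\ 0&1 \end{smallmatrix}\right)$, $T_{\omega}=\left(\begin{smallmatrix} 1&\omega\\ 0&1 \end{smallmatrix}\right)$ where $\omega=\frac{1+\sqrt{-7}}{2}$, and let $\mathbf{1}$ denote the identity matrix. Then, \begin{itemize} \item [(1)] $P_{k,\Delta}(\bar{z},z)=P_{k,\Delta}(z,\bar{z})$. \item [(2)] $P_{k,\Delta}(uz,\bar{u}\bar{z})=P_{k,\Delta}(z,\bar{z})$ for any unit $u \in \mathcal{O}_d$. \item [(3)] $P_{k,\Delta}|(\mathbf{1}+S)=0$. \item [(4)] $P_{k,\Delta}|(\mathbf{1}+TS\varepsilon-T)=0$. \item [(5)] Additionally, when $d=7$ (so $P_{k,\Delta}\in V_{k,k}(\mathcal{O}_7)$) we have \[ P_{k,\Delta}|(\mathbf{1}-T_{\omega}-ST^{-1}T_{\omega}S-TT_{\omega}^{-1}ST_{\omega})=0.\] \end{itemize}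
   Context: Let $d\in\{1,2,3,7,11\}$, $K=\mathbb{Q}(\sqrt{-d})$ the corresponding Euclidean imaginary quadratic field and $\mathcal{O}_d$ its ring of integers, with norm $N(b)=b\bar b$. Let $k\geq 1$ be an odd integer and $\Delta$ a positive integer that is not a norm of an element of $\mathcal{O}_d$. Define the polynomial $$P_{k,\Delta}(z,\bar{z})=\sum_{\substack{a,c\in\mathbb{Z},\ b\in\mathcal{O}_d\\ N(b)-ac=\Delta \\ c<0<a}} \left(az\bar{z}+bz+\bar{b}\bar{z}+c\right)^{k}.$$ For a polynomial $P(z,\bar z)$ of degree at most $k$ in each of $z,\bar z$ and a matrix $\gamma=\left(\begin{smallmatrix} a&b\\ c&e\end{smallmatrix}\right)$ (with complex entries, modulo $\pm 1$), the right action is $(P|\gamma)(z,\bar z)=(cz+e)^{k}\overline{(cz+e)}^{k}P\left(\frac{az+b}{cz+e},\frac{\bar a\bar z+\bar b}{\bar c\bar z+\bar e}\right)$, extended linearly to formal integer combinations of matrices (the group ring); in particular $P|\varepsilon=P(-z,-\bar z)$. *)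

From HB Require Import structures.
From mathcomp Require Import all_boot all_order all_algebra all_field.
From mathcomp Require Import boolp classical_sets fsbigop.
Set Implicit Arguments. Unset Strict Implicit. Unset Printing Implicit Defensive.
Import Order.TTheory GRing.Theory Num.Theory.
Local Open Scope classical_set_scope.
Local Open Scope ring_scope.

(* K = Q(sqrt(-d)) is embedded in algC (algebraic complex numbers). *)
Definition omega_d (d : nat) : algC :=
  if (d %% 4 == 3)%N then (1 + sqrtC (- (d%:R))) / 2 else sqrtC (- (d%:R)).

Definition Oel (d : nat) (x y : int) : algC := x%:~R + y%:~R * omega_d d.

Definition in_Od (d : nat) (b : algC) : Prop := exists x y : int, b = Oel d x y.

Definition unit_Od (d : nat) (u : algC) : Prop :=
  in_Od d u /\ exists v, in_Od d v /\ u * v = 1.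

Definition normK (b : algC) : algC := b * b^*.

(* Polynomials in two independent variables z (inner, X) and zbar (outer, Y):
   the coefficient of z^i zbar^j of P is (P`_j)`_i. *)
Notation poly2 := {poly {poly algC}}.
Definition Xz : poly2 := ('X : {poly algC})%:P.
Definition Yw : poly2 := 'X.
Definition coef2 (P : poly2) (i j : nat) : algC := (P`_j)`_i.
Definition cst2 (a : algC) : poly2 := a%:P%:P.

Definition subst2 (P f g : poly2) : poly2 :=
  \sum_(j < size P) \sum_(i < size P`_j) cst2 (coef2 P i j) * f ^+ i * g ^+ j.

Definition Pindex (d Delta : nat) : set (int * int * int * int) :=
  [set t | let: (a, c, x, y) := t in
           normK (Oel d x y) - (a * c)%:~R = Delta%:R /\ (c < 0)%R /\ (0 < a)%R].

Definition Pterm (d k : nat) (t : int * int * int * int) : poly2 :=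
  let: (a, c, x, y) := t in
  let b := Oel d x y in
  (cst2 a%:~R * Xz * Yw + cst2 b * Xz + cst2 b^* * Yw + cst2 c%:~R) ^+ k.

Definition P_kD (d k Delta : nat) : poly2 := \sum_(t \in Pindex d Delta) Pterm d k t.

(* Right slash action of weight (k,k) on V_{k,k} (degree <= k in each variable):
   (P|g)(z,zb) = (cz+e)^k (cb zb+eb)^k P((az+b)/(cz+e), (ab zb+bb)/(cb zb+eb)),
   written out on monomials. *)
Definition slash (k : nat) (P : poly2) (g : 'M[algC]_2) : poly2 :=
  let a := g 0 0 in let b := g 0 1 in let c := g 1 0 in let e := g 1 1 in
  \sum_(j < k.+1) \sum_(i < k.+1)
     cst2 (coef2 P i j) *
     (cst2 a * Xz + cst2 b) ^+ i * (cst2 c * Xz + cst2 e) ^+ (k - i) *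
     (cst2 a^* * Yw + cst2 b^*) ^+ j * (cst2 c^* * Yw + cst2 e^*) ^+ (k - j).

(* extension to the group ring: formal integer combinations of matrices *)
Definition slashZ (k : nat) (P : poly2) (s : seq (int * 'M[algC]_2)) : poly2 :=
  \sum_(p <- s) p.1%:~R *: slash k P p.2.

Definition mx2 (a b c e : algC) : 'M[algC]_2 :=
  \matrix_(i < 2, j < 2)
    (if i == 0 then (if j == 0 then a else b) else (if j == 0 then c else e)).

Definition epsM : 'M[algC]_2 := mx2 (-1) 0 0 1.
Definition SM : 'M[algC]_2 := mx2 0 (-1) 1 0.
Definition TM : 'M[algC]_2 := mx2 1 1 0 1.
Definition omega7 : algC := (1 + sqrtC (-7)) / 2.
Definition TwM : 'M[algC]_2 := mx2 1 omega7 0 1.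
Definition oneM : 'M[algC]_2 := 1%:M.

From HB Require Import structures.
From mathcomp Require Import all_boot all_order all_algebra all_field.
From mathcomp Require Import boolp classical_sets cardinality fsbigop.
From mathcomp Require Import ring zify.
Import Order.TTheory GRing.Theory Num.Theory Num.Def.
Local Open Scope classical_set_scope.
Local Open Scope ring_scope.
Set Implicit Arguments. Unset Strict Implicit. Unset Printing Implicit Defensive.

(* Write t = (a, c, x, y) for the form Q_t(z) = a z zbar + b z + bbar zbar + c with
   b = x + y omega, of discriminant N(b) - a c.  A matrix g maps Q_t to
   Q_t(g z) |c z + e|^2 = Q_(phi t)(z) for an explicit bijection phi of the forms of
   discriminant Delta, so P|g is the sum of Q^k over those forms that take a
   positive value at the cusp g^-1 oo and a negative one at g^-1 0.  As Delta is not
   a norm, values of Q at cusps never vanish, and as k is odd, Q |-> -Q negates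
   Q^k; together these give the cocycle relation S(p, q) + S(q, r) = S(p, r) for
   the sums S(p, q) over {p > 0 > q}, and (3)-(5) telescope by it.  Parts (1)
   and (2) reindex the sum by b |-> bbar and b |-> b u.  Every polynomial identity
   is checked by evaluating z and zbar at independent complex numbers u and v
   away from finitely many poles. *)

(** * Evaluating polynomials in z and zbar *)

Definition ev2 (u v : algC) : {rmorphism poly2 -> algC} :=
  horner_eval v \o map_poly (horner_eval u).
Arguments ev2 : simpl never.

Lemma ev2E u v P : ev2 u v P = (map_poly (horner_eval u) P).[v].
Proof. by []. Qed.

Lemma ev2_cst2 u v a : ev2 u v (cst2 a) = a.
Proof. by rewrite ev2E map_polyC /= horner_evalE !hornerC. Qed.

Lemma ev2_Xz u v : ev2 u v Xz = u.
Proof. by rewrite ev2E map_polyC /= horner_evalE hornerC hornerX. Qed.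

Lemma ev2_Yw u v : ev2 u v Yw = v.
Proof. by rewrite ev2E map_polyX hornerX. Qed.

Lemma ev2_coef u v P :
  ev2 u v P = \sum_(j < size P) \sum_(i < size P`_j) coef2 P i j * u ^+ i * v ^+ j.
Proof.
have sizeP : (size (map_poly (horner_eval u) P) <= size P)%N by exact: size_poly.
rewrite ev2E (horner_coef_wide _ sizeP); apply: eq_bigr => j _.
by rewrite coef_map /= horner_evalE horner_coef mulr_suml.
Qed.

Lemma ev2_subst2 u v P f g : ev2 u v (subst2 P f g) = ev2 (ev2 u v f) (ev2 u v g) P.
Proof.
rewrite /subst2 rmorph_sum ev2_coef; apply: eq_bigr => j _.
by rewrite rmorph_sum; apply: eq_bigr => i _; rewrite !rmorphM !rmorphXn ev2_cst2.
Qed.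

Lemma ev2_scale u v (c : {poly algC}) Q : ev2 u v (c *: Q) = c.[u] * ev2 u v Q.
Proof. by rewrite -mul_polyC rmorphM ev2E map_polyC hornerC. Qed.

Lemma ev2_slashZ k P s u v :
  ev2 u v (slashZ k P s) = \sum_(p <- s) p.1%:~R * ev2 u v (slash k P p.2).
Proof. by rewrite rmorph_sum; apply: eq_bigr => p _; rewrite ev2_scale horner_int. Qed.

Lemma poly_eq0_off (p : {poly algC}) (s : seq algC) :
  (forall x, x \notin s -> p.[x] = 0) -> p = 0.
Proof.
move=> p0; pose r : seq algC := [seq i%:R | i <- iota 0 (size p + size s)].
have r_uniq : uniq r.
  by rewrite map_inj_uniq ?iota_uniq // => i j /eqP; rewrite eqr_nat => /eqP.
apply: (@roots_geq_poly_eq0 _ _ [seq x <- r | x \notin s]).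
- by apply/allP => x; rewrite mem_filter => /andP[/p0/rootP].
- exact: filter_uniq.
have in_s : (count (fun x => x \in s) r <= size s)%N.
  rewrite -size_filter; apply: uniq_leq_size (filter_uniq _ r_uniq) _ => x.
  by rewrite mem_filter => /andP[].
have split_r : (count (fun x => x \in s) r + count (fun x => x \notin s) r = size r)%N.
  exact: count_predC.
rewrite size_filter -(leq_add2l (count (fun x => x \in s) r)) split_r.
by rewrite size_map size_iota addnC leq_add2l.
Qed.

Lemma poly2_eq0_off (P : poly2) (su sv : seq algC) :
  (forall u v, u \notin su -> v \notin sv -> ev2 u v P = 0) -> P = 0.
Proof.
move=> P0; apply/polyP => j; rewrite coef0; apply: (poly_eq0_off (s := su)) => u su_u.
have Pu0 : map_poly (horner_eval u) P = 0.
  by apply: (poly_eq0_off (s := sv)) => v sv_v; exact: P0.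
by have := congr1 (fun q : {poly algC} => q`_j) Pu0; rewrite coef_map coef0.
Qed.

Lemma poly2_ext (P Q : poly2) : (forall u v, ev2 u v P = ev2 u v Q) -> P = Q.
Proof.
move=> PQ; apply/eqP; rewrite -subr_eq0; apply/eqP.
by apply: (poly2_eq0_off (su := [::]) (sv := [::])) => u v _ _; rewrite rmorphB PQ subrr.
Qed.

Definition bideg_le (m n : nat) (P : poly2) :=
  forall i j, (m < i)%N || (n < j)%N -> coef2 P i j = 0.

Lemma bideg_leW m n m' n' P :
  (m <= m')%N -> (n <= n')%N -> bideg_le m n P -> bideg_le m' n' P.
Proof. by move=> mm' nn' Pmn i j ij; apply: Pmn; lia. Qed.

Lemma bideg_leD m n P Q : bideg_le m n P -> bideg_le m n Q -> bideg_le m n (P + Q).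
Proof.
move=> Pmn Qmn i j ij.
by rewrite /coef2 !coefD -/(coef2 P i j) -/(coef2 Q i j) Pmn ?Qmn ?addr0.
Qed.

Lemma bideg_leM m n m' n' P Q : bideg_le m n P -> bideg_le m' n' Q ->
  bideg_le (m + m') (n + n') (P * Q).
Proof.
move=> Pmn Qmn i j ij; rewrite /coef2 coefM coef_sum big1 // => -[l lj] _ /=.
rewrite coefM big1 // => -[h hi] _ /=.
have : [|| (m < h)%N, (n < l)%N, (m' < i - h)%N | (n' < j - l)%N] by lia.
case/or4P => lt.
- by rewrite -/(coef2 P h l) Pmn ?lt ?mul0r.
- by rewrite -/(coef2 P h l) Pmn ?lt ?orbT ?mul0r.
- by rewrite -/(coef2 Q _ _) Qmn ?lt ?mulr0.
- by rewrite -/(coef2 Q _ _) Qmn ?lt ?orbT ?mulr0.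
Qed.

Lemma bideg_le_cst2 a : bideg_le 0 0 (cst2 a).
Proof.
move=> i j ij; rewrite /coef2 coefC; case: j ij => [|j] ij /=; last by rewrite coef0.
by rewrite coefC; case: i ij.
Qed.

Lemma bideg_le_Xz : bideg_le 1 0 Xz.
Proof.
move=> i j ij; rewrite /coef2 /Xz coefC; case: j ij => [|j] ij /=; last by rewrite coef0.
by rewrite coefX; case: i ij => [|[|i]].
Qed.

Lemma bideg_le_Yw : bideg_le 0 1 Yw.
Proof.
move=> i j ij; rewrite /coef2 /Yw coefX; case: j ij => [|[|j]] ij /=; rewrite ?coef0 //.
by rewrite coef1; case: i ij.
Qed.

Lemma bideg_leX m n P e : bideg_le m n P -> bideg_le (m * e) (n * e) (P ^+ e).
Proof.
move=> Pmn; elim: e => [|e IHe]; last by rewrite exprS !mulnS; exact: bideg_leM.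
rewrite !muln0 expr0 => i j ij; rewrite /coef2 -[1]/(cst2 1).
exact: bideg_le_cst2.
Qed.

Lemma ev2_bideg k P u v : bideg_le k k P ->
  ev2 u v P = \sum_(j < k.+1) \sum_(i < k.+1) coef2 P i j * u ^+ i * v ^+ j.
Proof.
move=> Pkk.
have Pj0 j : (k < j)%N -> P`_j = 0.
  by move=> kj; apply/polyP => i; rewrite coef0; apply: Pkk; rewrite kj orbT.
have sizeP : (size (map_poly (horner_eval u) P) <= k.+1)%N.
  by apply/leq_sizeP => j kj; rewrite coef_map /= Pj0 // horner_evalE horner0.
rewrite ev2E (horner_coef_wide _ sizeP); apply: eq_bigr => j _.
have sizePj : (size (P`_j)%R <= k.+1)%N by apply/leq_sizeP => i ki; apply: Pkk; rewrite ki.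
by rewrite coef_map /= horner_evalE (horner_coef_wide _ sizePj) mulr_suml.
Qed.

(** * Matrices acting by fractional linear maps *)

Definition mob_num (g : 'M[algC]_2) z := g 0 0 * z + g 0 1.
Definition mob_den (g : 'M[algC]_2) z := g 1 0 * z + g 1 1.

Lemma ev2_slash k P g u v : bideg_le k k P ->
  mob_den g u != 0 -> mob_den (map_mx conjC g) v != 0 ->
  ev2 u v (slash k P g) =
  (mob_den g u * mob_den (map_mx conjC g) v) ^+ k *
  ev2 (mob_num g u / mob_den g u)
      (mob_num (map_mx conjC g) v / mob_den (map_mx conjC g) v) P.
Proof.
rewrite /mob_num /mob_den !mxE => Pkk Bu Dv.
rewrite (ev2_bideg _ _ Pkk) mulr_sumr rmorph_sum; apply: eq_bigr => j _.
rewrite mulr_sumr rmorph_sum; apply: eq_bigr => i _.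
rewrite !rmorphM !rmorphXn !rmorphD !rmorphM !ev2_cst2 ev2_Xz ev2_Yw.
rewrite exprMn !exprB ?leq_ord ?unitfE // !expr_div_n.
by field; rewrite !expf_neq0.
Qed.

Lemma mob_num_mx2 a b c e z : mob_num (mx2 a b c e) z = a * z + b.
Proof. by rewrite /mob_num !mxE. Qed.

Lemma mob_den_mx2 a b c e z : mob_den (mx2 a b c e) z = c * z + e.
Proof. by rewrite /mob_den !mxE. Qed.

Lemma mob_den_mx2_neq0 a b c e z : c != 0 -> z != - e / c -> mob_den (mx2 a b c e) z != 0.
Proof.
move=> c0; apply: contra; rewrite mob_den_mx2 addr_eq0 => /eqP <-.
by rewrite [c * z]mulrC mulfK.
Qed.

Lemma map_mx2 (f : algC -> algC) a b c e :
  map_mx f (mx2 a b c e) = mx2 (f a) (f b) (f c) (f e).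
Proof. by apply/matrixP => i j; rewrite !mxE; case: ifP; case: ifP. Qed.

Lemma mulmx2 a b c e a' b' c' e' :
  mx2 a b c e *m mx2 a' b' c' e' =
  mx2 (a * a' + b * c') (a * b' + b * e') (c * a' + e * c') (c * b' + e * e').
Proof.
apply/matrixP => i j; rewrite !mxE !big_ord_recr big_ord0 /= add0r !mxE.
by case: i => [[|[|i]] hi] //; case: j => [[|[|j]] hj].
Qed.

Lemma oneM_mx2 : oneM = mx2 1 0 0 1.
Proof.
apply/matrixP => i j; rewrite !mxE.
by case: i => [[|[|i]] hi] //; case: j => [[|[|j]] hj].
Qed.

Lemma invmx2 a b c e : a * e - b * c = 1 -> invmx (mx2 a b c e) = mx2 e (- b) (- c) a.
Proof.
move=> det1; have inv : mx2 a b c e *m mx2 e (- b) (- c) a = 1%:M.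
  by rewrite mulmx2 -/oneM oneM_mx2; congr mx2; rewrite -?det1; ring.
have [unit_g _] := mulmx1_unit inv.
by rewrite -[RHS]mul1mx -(mulVmx unit_g) -mulmxA inv mulmx1.
Qed.

(** * The ring of integers Z[omega] *)

Lemma conj_sqrtC_lt0 (x : algC) : x < 0 -> (sqrtC x)^* = - sqrtC x.
Proof.
move=> x_lt0; set r := sqrtC x.
have r2 : r ^+ 2 = x by exact: sqrtCK.
have cr2 : r^* ^+ 2 = x by rewrite -rmorphXn r2; exact/conj_Creal/ltr0_real.
have : (r^* - r) * (r^* + r) == 0 by rewrite -subr_sqr cr2 r2 subrr.
rewrite mulf_eq0 subr_eq0 addr_eq0 => /orP[/eqP r_real|/eqP //].
have : 0 <= r ^+ 2 by rewrite real_exprn_even_ge0 // CrealE r_real.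
by rewrite r2 => /le_lt_trans/(_ x_lt0); rewrite ltxx.
Qed.

Definition omega_trace (d : nat) : int := if (d %% 4 == 3)%N then 1 else 0.
Definition omega_norm (d : nat) : int :=
  if (d %% 4 == 3)%N then (d.+1 %/ 4)%N%:Z else d%:Z.

Section QuadraticIntegers.

Variable d : nat.
Hypothesis d_gt0 : (0 < d)%N.

Local Notation w := (omega_d d).
Local Notation s := (omega_trace d).
Local Notation n := (omega_norm d).

Lemma omega_conj_sqr : w^* = s%:~R - w /\ w ^+ 2 = s%:~R * w - n%:~R.
Proof.
have d_lt0 : - d%:R < 0 :> algC by rewrite oppr_lt0 ltr0n.
have cr := conj_sqrtC_lt0 d_lt0; have r2 := sqrtCK (- d%:R : algC).
rewrite /omega_d /omega_trace /omega_norm; case: ifP => d3; last first.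
  by rewrite cr sub0r mul0r sub0r r2.
have /divnK d4 : (4 %| d.+1)%N by lia.
have n4 : ((d.+1 %/ 4)%N%:Z%:~R : algC) = (d%:R + 1) / 4.
  by rewrite -[LHS]/((d.+1 %/ 4)%N%:R) natr1 -[in RHS]d4 natrM mulfK ?pnatr_eq0.
rewrite !rmorphM rmorphD rmorph1 fmorphV /= cr !rmorph_nat !mulr1z n4.
by split; [field | field: r2].
Qed.

Lemma omega_disc_gt0 : 0 < 4 * n - s ^+ 2.
Proof.
rewrite /omega_norm /omega_trace; case: ifP => d3; last by lia.
have /divnK d4 : (4 %| d.+1)%N by lia.
by rewrite expr1n; lia.
Qed.

Definition normf (x y : int) : int := x ^+ 2 + s * x * y + n * y ^+ 2.

Lemma four_normf x y :
  4 * normf x y = (2 * x + s * y) ^+ 2 + (4 * n - s ^+ 2) * y ^+ 2.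
Proof. by rewrite /normf; ring. Qed.

Lemma normf_ge0 x y : 0 <= normf x y.
Proof.
rewrite -(pmulr_rge0 _ (_ : 0 < 4)) // four_normf addr_ge0 ?sqr_ge0 //.
by rewrite mulr_ge0 ?sqr_ge0 // ltW // omega_disc_gt0.
Qed.

Lemma conj_Oel x y : (Oel d x y)^* = Oel d (x + s * y) (- y).
Proof.
have [wc _] := omega_conj_sqr.
by rewrite /Oel rmorphD rmorphM /= wc !rmorph_int !(intrD, intrM, intrN); ring.
Qed.

Lemma normK_Oel x y : normK (Oel d x y) = (normf x y)%:~R.
Proof.
have [_ w2] := omega_conj_sqr.
by rewrite /normK conj_Oel /Oel /normf !(intrD, intrM, intrN, rmorphXn); ring: w2.
Qed.

Lemma Oel_mul x y x' y' :
  Oel d x y * Oel d x' y' = Oel d (x * x' - n * y * y') (x * y' + y * x' + s * y * y').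
Proof.
have [_ w2] := omega_conj_sqr.
by rewrite /Oel !(intrD, intrM, intrN, intrB); ring: w2.
Qed.

Lemma Oel_inj x y x' y' : Oel d x y = Oel d x' y' -> x = x' /\ y = y'.
Proof.
move=> e; have [_ w2] := omega_conj_sqr.
(* the integer [2 (x' - x) - s (y - y')] is [(y - y') (2 w - s)], and [(2 w - s)^2 < 0] *)
have sq : (2 * (x' - x) - s * (y - y')) ^+ 2 = (y - y') ^+ 2 * (s ^+ 2 - 4 * n).
  apply: (@intr_inj algC); move: e.
  rewrite /Oel !(intrD, intrM, intrN, intrB, rmorphXn) => e.
  have -> : x'%:~R = x%:~R + y%:~R * w - y'%:~R * w :> algC by rewrite e; ring.
  by ring: w2.
have disc_lt0 : s ^+ 2 - 4 * n < 0 by have := omega_disc_gt0; lia.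
have yy' : y = y'.
  have : 0 <= (y - y') ^+ 2 * (s ^+ 2 - 4 * n) by rewrite -sq sqr_ge0.
  rewrite nmulr_lge0 // => le0; apply/eqP; rewrite -subr_eq0 -sqrf_eq0.
  by rewrite eq_le le0 sqr_ge0.
move: sq; rewrite yy' subrr mulr0 subr0 expr0n mul0r => /eqP.
by rewrite sqrf_eq0 => /eqP; lia.
Qed.

Lemma normKM (a b : algC) : normK (a * b) = normK a * normK b.
Proof. by rewrite /normK rmorphM /=; ring. Qed.

Lemma unit_Od_normf u : unit_Od d u -> exists p q, u = Oel d p q /\ normf p q = 1.
Proof.
case=> -[p [q ->]] [_ [[p' [q' ->]] inv]]; exists p, q; split => //.
have /eqP NN : normf p q * normf p' q' == 1.
  by rewrite -(eqr_int algC) mulr1z intrM -!normK_Oel -normKM inv /normK rmorph1 mulr1.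
rewrite -[normf p q]gez0_abs ?normf_ge0 // -[normf p' q']gez0_abs ?normf_ge0 // in NN *.
by move: NN; rewrite -PoszM => -[/eqP]; rewrite muln_eq1 => /andP[/eqP -> _].
Qed.

Lemma normf_neq (m : nat) : (forall b, in_Od d b -> normK b != m%:R) ->
  forall x y, normf x y != m%:Z.
Proof.
move=> not_norm x y; have := not_norm (Oel d x y) (ex_intro _ x (ex_intro _ y erefl)).
by rewrite normK_Oel -[m%:R]/(m%:Z%:~R) eqr_int.
Qed.

End QuadraticIntegers.

(** * Sums over sign regions *)

Section SignRegions.

Variables (T : choiceType) (D : set T).

Definition region (p q : T -> int) : set T := [set t | D t /\ 0 < p t /\ q t < 0].

Variables (V : zmodType) (neg : T -> T) (f : T -> V).
Hypotheses (negK : involutive neg) (D_neg : forall t, D t -> D (neg t))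
  (f_neg : forall t, f (neg t) = - f t).

Definition sign_coord (p : T -> int) :=
  (forall t, p (neg t) = - p t) /\ (forall t, D t -> p t != 0).

Lemma finite_region_trans p q r : (forall t, D t -> q t != 0) ->
  finite_set (region p q) -> finite_set (region q r) -> finite_set (region p r).
Proof.
move=> q0 finA finB; apply: (@sub_finite_set _ _ (region p q `|` region q r)).
  move=> t [Dt [pt rt]]; have := q0 t Dt.
  by case: (ltgtP (q t) 0) => // qt _; [left | right].
by rewrite finite_setU.
Qed.

(* Split [region p q] by the sign of [r], [region q r] by that of [p] and [region p r]
   by that of [q]: the pieces match up except for the cells of sign patterns
   (+, -, +) and (-, +, -), which [neg] exchanges, so their sums cancel. *)
Lemma region_cocycle p q r : sign_coord p -> sign_coord q -> sign_coord r ->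
  finite_set (region p q) -> finite_set (region q r) ->
  \sum_(t \in region p q) f t + \sum_(t \in region q r) f t =
  \sum_(t \in region p r) f t.
Proof.
move=> [pN p0] [qN q0] [rN r0] finA finB.
have finC := finite_region_trans q0 finA finB.
rewrite (fsbigID [set t | r t < 0] _ _ finA) (fsbigID [set t | 0 < p t] _ _ finB).
rewrite (fsbigID [set t | 0 < q t] _ _ finC).
have -> : region p q `&` [set t | r t < 0] = region p r `&` ~` [set t | 0 < q t].
  apply/seteqP; split => t /= [[Dt [pt qt]] rt]; do !split => //; first lia.
  by have := q0 t Dt; lia.
have -> : region q r `&` [set t | 0 < p t] = region p r `&` [set t | 0 < q t].
  by apply/seteqP; split => t /= [[Dt [? ?]] ?]; do !split.
have -> : region q r `&` ~` [set t | 0 < p t] =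
          neg @` (region p q `&` ~` [set t | r t < 0]).
  apply/seteqP; split => t /=.
    move=> [[Dt [qt rt]] pt]; exists (neg t); last exact: negK.
    have := p0 t Dt; rewrite /region /= !(pN, qN, rN); do !split; [exact: D_neg | lia ..].
  move=> [s [[Ds [ps qs]] rs] <-]; have := r0 s Ds.
  rewrite /region /= !(pN, qN, rN); do !split; [exact: D_neg | lia ..].
rewrite fsbig_image /=; last by move=> s t _ _ /(can_inj negK).
have negX : (\sum_(t \in region p q `&` ~` [set t | r t < 0]) f (neg t)) +
            \sum_(t \in region p q `&` ~` [set t | r t < 0]) f t = 0.
  rewrite -fsbig_split; last exact: finite_setIl.
  by apply: fsbig1 => t _ /=; rewrite f_neg addNr.
move/eqP: negX; rewrite /= addr_eq0 => /eqP ->.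
by rewrite addrACA addrN addr0 addrC.
Qed.

End SignRegions.

(** * Binary Hermitian forms *)

Notation hform := (int * int * int * int)%type.

Definition fa (t : hform) : int := let: (a, _, _, _) := t in a.
Definition fc (t : hform) : int := let: (_, c, _, _) := t in c.
Definition fx (t : hform) : int := let: (_, _, x, _) := t in x.
Definition fy (t : hform) : int := let: (_, _, _, y) := t in y.

Definition disc (d : nat) (t : hform) : int := normf d (fx t) (fy t) - fa t * fc t.

Definition fb (d : nat) (t : hform) : algC := Oel d (fx t) (fy t).

Definition formH (d : nat) (t : hform) (Z1 Z2 W1 W2 : algC) : algC :=
  (fa t)%:~R * Z1 * W1 + fb d t * Z1 * W2 + (fb d t)^* * Z2 * W1 + (fc t)%:~R * Z2 * W2.

Definition formv (d : nat) (t : hform) (u v : algC) : algC := formH d t u 1 v 1.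

Definition negf (t : hform) : hform := (- fa t, - fc t, - fx t, - fy t).

Lemma fa_negf t : fa (negf t) = - fa t. Proof. by case: t => [[[]]]. Qed.
Lemma fc_negf t : fc (negf t) = - fc t. Proof. by case: t => [[[]]]. Qed.

Lemma negfK : involutive negf.
Proof. by case=> [[[a c] x] y]; rewrite /negf /= !opprK. Qed.

Lemma finite_int_interval (M : int) : finite_set [set z : int | - M <= z <= M].
Proof.
apply: (@sub_finite_set _ _ ((fun i : nat => i%:Z - M) @` [set` iota 0 (absz M).*2.+1])).
  move=> z /= zM; exists (absz (z + M)); last by lia.
  by rewrite /= in_cons mem_iota; lia.
exact/finite_image/finite_seq.
Qed.

Definition disc_level (d Delta : nat) : set hform := [set t | disc d t = Delta%:Z].

Ltac form_ring :=
  case=> [[[a c] x] y]; rewrite /= ?/disc ?/normf /=; try congr (_, _, _, _); ring.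

Ltac acts_ring := case=> [[[a c] x] y] u v;
  rewrite map_mx2 !mob_num_mx2 !mob_den_mx2 /formv /formH /fb /= !conj_Oel // /Oel;
  rewrite ?(rmorph0, rmorph1, rmorphN) !(intrD, intrM, intrN); ring.

Ltac den_neq0 := rewrite ?map_mx2 mob_den_mx2 ?(rmorph0, rmorph1, rmorphN) ?mul0r ?mul1r
  ?mulN1r ?add0r ?addr0 ?oppr_eq0 ?oner_eq0 //.

Section Forms.

Variables (d k Delta : nat).
Hypotheses (d_gt0 : (0 < d)%N) (Delta_gt0 : (0 < Delta)%N).

Local Notation level := (disc_level d Delta).
Local Notation region := (region level).
Local Notation s := (omega_trace d).
Local Notation n := (omega_norm d).

Lemma Pindex_region : Pindex d Delta = region fa fc.
Proof.
apply/seteqP; split => -[[[a c] x] y]; rewrite /region /disc_level /disc /fa /fc /fx /=;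
  rewrite normK_Oel // -intrB -[Delta%:R]/(Delta%:Z%:~R).
- by move=> [/intr_inj ? [? ?]].
- by move=> [-> [? ?]].
Qed.

Lemma region_bounded t : region fa fc t ->
  let M := (4 * Delta)%N%:Z in
  [/\ - M <= fa t <= M, - M <= fc t <= M, - M <= fx t <= M & - M <= fy t <= M].
Proof.
case: t => [[[a c] x] y] [tD [a_gt0 c_lt0]] M.
rewrite /disc_level /disc /fa /fc /fx /fy /= in tD a_gt0 c_lt0 *.
have N_ge0 := normf_ge0 d_gt0 x y; have N4 := four_normf d x y.
have disc_gt0 := omega_disc_gt0 d_gt0.
have s01 : 0 <= s <= 1 by rewrite /omega_trace; case: ifP.
have ac : a * c <= -1 by nia.
have y2 : y ^+ 2 <= (4 * n - s ^+ 2) * y ^+ 2 by nia.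
have xy2 : 0 <= (2 * x + s * y) ^+ 2 by exact: sqr_ge0.
have yM : - M <= y <= M by nia.
have : - M <= 2 * x + s * y <= M by nia.
have : - M <= s * y <= M by nia.
by split; nia.
Qed.

Lemma finite_region : finite_set (region fa fc).
Proof.
pose I := [set z : int | - (4 * Delta)%N%:Z <= z <= (4 * Delta)%N%:Z].
apply: (@sub_finite_set _ _ (I `*` I `*` I `*` I)).
  by move=> [[[a c] x] y] /region_bounded[? ? ? ?].
by have fI := finite_int_interval (4 * Delta)%N%:Z; do !apply: finite_setX.
Qed.

Lemma ev2_Pterm u v t : ev2 u v (Pterm d k t) = formv d t u v ^+ k.
Proof.
have -> : Pterm d k t = (cst2 (fa t)%:~R * Xz * Yw + cst2 (fb d t) * Xz +
                         cst2 (fb d t)^* * Yw + cst2 (fc t)%:~R) ^+ k.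
  by case: t => [[[a c] x] y].
rewrite /formv /formH; move: (fb d t) => b.
by rewrite rmorphXn !rmorphD !rmorphM !ev2_cst2 ev2_Xz ev2_Yw !mulr1.
Qed.

Lemma bideg_Pterm t : bideg_le k k (Pterm d k t).
Proof.
case: t => [[[a c] x] y]; rewrite -[k in bideg_le k]mul1n -[k in bideg_le _ k]mul1n.
apply: bideg_leX; apply: bideg_leD; [apply: bideg_leD; [apply: bideg_leD|]|].
- exact: bideg_leM (bideg_leM (bideg_le_cst2 _) bideg_le_Xz) bideg_le_Yw.
- exact: bideg_leW (bideg_leM (bideg_le_cst2 _) bideg_le_Xz).
- exact: bideg_leW (bideg_leM (bideg_le_cst2 _) bideg_le_Yw).
- exact: bideg_leW (bideg_le_cst2 _).
Qed.

Lemma bideg_P : bideg_le k k (P_kD d k Delta).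
Proof.
rewrite /P_kD fsbig_finite; last by rewrite Pindex_region; exact: finite_region.
apply: (big_ind (bideg_le k k)) => [i j _||t _]; last exact: bideg_Pterm.
- by rewrite /coef2 !coef0.
- exact: bideg_leD.
Qed.

Lemma ev2_P u v : ev2 u v (P_kD d k Delta) = \sum_(t \in region fa fc) formv d t u v ^+ k.
Proof.
have fin := finite_region.
rewrite /P_kD Pindex_region !fsbig_finite //.
by rewrite (rmorph_sum (ev2 u v)); apply: eq_bigr => t _; rewrite ev2_Pterm.
Qed.

Lemma formH_homog t (A B C D : algC) : B != 0 -> D != 0 ->
  B * D * formv d t (A / B) (C / D) = formH d t A B C D.
Proof. by move=> B0 D0; rewrite /formv /formH; field; rewrite B0 D0. Qed.

Definition acts (g : 'M[algC]_2) (phi : hform -> hform) := forall t u v,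
  formH d t (mob_num g u) (mob_den g u) (mob_num (map_mx conjC g) v)
    (mob_den (map_mx conjC g) v) = formv d (phi t) u v.

Lemma ev2_slash_P g phi u v : acts g phi ->
  mob_den g u != 0 -> mob_den (map_mx conjC g) v != 0 ->
  ev2 u v (slash k (P_kD d k Delta) g) =
  \sum_(t \in region fa fc) formv d (phi t) u v ^+ k.
Proof.
move=> g_phi Bu Dv; rewrite (ev2_slash bideg_P Bu Dv) ev2_P mulr_fsumr.
by apply: eq_fsbigr => t _; rewrite -exprMn formH_homog // g_phi.
Qed.

Definition moves (phi : hform -> hform) (p q : hform -> int) :=
  [/\ bijective phi, forall t, disc d (phi t) = disc d t,
      forall t, p (phi t) = fa t & forall t, q (phi t) = fc t].

Lemma region_moves phi p q : moves phi p q -> region p q = phi @` region fa fc.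
Proof.
case=> [[psi phiK psiK] disc_phi p_phi q_phi]; apply/seteqP; split => [t'|_ [t t_ac <-]].
  move=> [t'_lev [p_t' q_t']]; exists (psi t'); last exact: psiK.
  by rewrite /region /disc_level /= -disc_phi -p_phi -q_phi !psiK.
by case: t_ac => t_lev [a_t c_t]; rewrite /region /disc_level /= disc_phi p_phi q_phi.
Qed.

Lemma finite_region_moves phi p q : moves phi p q -> finite_set (region p q).
Proof. by move/region_moves->; exact/finite_image/finite_region. Qed.

Lemma sum_region_moves phi p q (F : hform -> algC) : moves phi p q ->
  \sum_(t \in region fa fc) F (phi t) = \sum_(t \in region p q) F t.
Proof.
move=> phi_pq; rewrite (region_moves phi_pq) fsbig_image //.
by case: phi_pq => [[psi phiK _] _ _ _] t t' _ _ /(can_inj phiK).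
Qed.

Lemma moves_id : moves id fa fc.
Proof. by split=> //; exists id. Qed.

Lemma ev2_slash_region g phi p q u v : acts g phi -> moves phi p q ->
  mob_den g u != 0 -> mob_den (map_mx conjC g) v != 0 ->
  ev2 u v (slash k (P_kD d k Delta) g) = \sum_(t \in region p q) formv d t u v ^+ k.
Proof.
move=> g_phi phi_pq Bu Dv; rewrite (ev2_slash_P g_phi Bu Dv).
exact: (sum_region_moves (fun t => formv d t u v ^+ k) phi_pq).
Qed.

Lemma level_negf t : level t -> level (negf t).
Proof. by case: t => [[[a c] x] y]; rewrite /disc_level /disc /normf /= => <-; ring. Qed.

Lemma formv_negf t u v : formv d (negf t) u v = - formv d t u v.
Proof.
case: t => [[[a c] x] y].
rewrite /formv /formH /fb /Oel /= !(intrN, rmorphD, rmorphN, rmorphM) /=; ring.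
Qed.

Definition cjf (t : hform) : hform := let: (a, c, x, y) := t in (a, c, x + s * y, - y).

Lemma moves_cjf : moves cjf fa fc.
Proof. by split; [exists cjf|..]; form_ring. Qed.

Lemma formv_cjf t u v : formv d (cjf t) u v = formv d t v u.
Proof.
case: t => [[[a c] x] y]; rewrite /formv /formH /fb /= !conj_Oel // /Oel.
by rewrite !(intrD, intrM, intrN); ring.
Qed.

Lemma P_conj_sym : subst2 (P_kD d k Delta) Yw Xz = P_kD d k Delta.
Proof.
apply: poly2_ext => u v; rewrite ev2_subst2 ev2_Yw ev2_Xz !ev2_P.
rewrite -[RHS](sum_region_moves _ moves_cjf).
by apply: eq_fsbigr => t _; rewrite formv_cjf.
Qed.

Definition mulf (p q : int) (t : hform) : hform :=
  let: (a, c, x, y) := t in (a, c, x * p - n * y * q, x * q + y * p + s * y * q).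

Lemma fb_mulf p q t : fb d (mulf p q t) = fb d t * Oel d p q.
Proof. by case: t => [[[a c] x] y]; rewrite /fb /= Oel_mul. Qed.

Lemma normK_fb_mulf p q t : normK (fb d (mulf p q t)) = normK (fb d t) * normK (Oel d p q).
Proof. by rewrite fb_mulf normKM. Qed.

Lemma mulfK p q p' q' : Oel d p q * Oel d p' q' = 1 -> cancel (mulf p q) (mulf p' q').
Proof.
move=> inv t; have : fb d (mulf p' q' (mulf p q t)) = fb d t.
  by rewrite !fb_mulf -mulrA inv mulr1.
by case: t => [[[a c] x] y]; rewrite /fb /= => /Oel_inj[//|-> ->].
Qed.

Lemma disc_mulf p q t : normf d p q = 1 -> disc d (mulf p q t) = disc d t.
Proof.
move=> N1; have := normK_fb_mulf p q t; rewrite normK_Oel // N1 mulr1.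
case: t => [[[a c] x] y]; rewrite /fb /disc /= !normK_Oel // => /intr_inj.
by move->.
Qed.

Lemma moves_mulf p q : normf d p q = 1 -> moves (mulf p q) fa fc.
Proof.
move=> N1; have unit_pq : Oel d p q * (Oel d p q)^* = 1.
  by rewrite -[_ * _]/(normK _) normK_Oel // N1.
rewrite conj_Oel // in unit_pq; split=> [||t|t]; last 2 first.
- by case: t => [[[]]].
- by case: t => [[[]]].
- by exists (mulf (p + s * q) (- q)); apply: mulfK; rewrite // mulrC.
- by move=> t; exact: disc_mulf.
Qed.

Lemma formv_mulf p q t u v : normf d p q = 1 ->
  formv d (mulf p q t) u v = formv d t (Oel d p q * u) ((Oel d p q)^* * v).
Proof.
move=> N1; have unit_pq : Oel d p q * (Oel d p q)^* = 1.
  by rewrite -[_ * _]/(normK _) normK_Oel // N1.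
rewrite /formv /formH fb_mulf rmorphM; move: (fb d t) => b.
by case: t => [[[a c] x] y] /=; ring: unit_pq.
Qed.

Lemma P_unit_inv u0 : unit_Od d u0 ->
  subst2 (P_kD d k Delta) (cst2 u0 * Xz) (cst2 u0^* * Yw) = P_kD d k Delta.
Proof.
case/(unit_Od_normf d_gt0) => p [q [-> N1]].
apply: poly2_ext => u v; rewrite ev2_subst2 !rmorphM !ev2_cst2 ev2_Xz ev2_Yw !ev2_P.
rewrite -[RHS](sum_region_moves _ (moves_mulf N1)).
by apply: eq_fsbigr => t _; rewrite formv_mulf.
Qed.

Hypothesis not_norm : forall x y, normf d x y != Delta%:Z.

Lemma fa_neq0 t : level t -> fa t != 0.
Proof.
case: t => [[[a c] x] y]; rewrite /disc_level /disc /=.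
by move=> tD; apply: contraNneq (not_norm x y) => a0; rewrite -tD a0 mul0r subr0.
Qed.

Lemma fc_neq0 t : level t -> fc t != 0.
Proof.
case: t => [[[a c] x] y]; rewrite /disc_level /disc /=.
by move=> tD; apply: contraNneq (not_norm x y) => c0; rewrite -tD c0 mulr0 subr0.
Qed.

Lemma moves_sign_coord phi p q : moves phi p q ->
  (forall t, p (negf t) = - p t) -> (forall t, q (negf t) = - q t) ->
  sign_coord level negf p /\ sign_coord level negf q.
Proof.
case=> [[psi phiK psiK] disc_phi p_phi q_phi] pN qN.
have psi_level t : level t -> level (psi t).
  by move=> lt; rewrite /disc_level /= -disc_phi psiK.
split; split=> // t /psi_level psi_t_level; rewrite -(psiK t).
  by rewrite p_phi fa_neq0.
by rewrite q_phi fc_neq0.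
Qed.

Lemma sign_coord_fa : sign_coord level negf fa.
Proof. by split; [exact: fa_negf | exact: fa_neq0]. Qed.

Lemma sign_coord_fc : sign_coord level negf fc.
Proof. by split; [exact: fc_negf | exact: fc_neq0]. Qed.

Hypothesis k_odd : odd k.

Lemma forms_cocycle u v p q r :
  sign_coord level negf p -> sign_coord level negf q -> sign_coord level negf r ->
  finite_set (region p q) -> finite_set (region q r) ->
  \sum_(t \in region p q) formv d t u v ^+ k + \sum_(t \in region q r) formv d t u v ^+ k =
  \sum_(t \in region p r) formv d t u v ^+ k.
Proof.
apply: region_cocycle; [exact: negfK | exact: level_negf | move=> t].
by rewrite formv_negf exprNn -signr_odd k_odd mulN1r.
Qed.

Lemma region_diag p : region p p = set0.
Proof. by apply/seteqP; split=> // t [_ [/lt_trans lt /lt]]; rewrite ltxx. Qed.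

Lemma acts_one : acts (mx2 1 0 0 1) id.
Proof. by acts_ring. Qed.

Definition phiS (t : hform) : hform := let: (a, c, x, y) := t in (c, a, - x - s * y, y).

Lemma acts_S : acts (mx2 0 (-1) 1 0) phiS.
Proof. by acts_ring. Qed.

Lemma moves_S : moves phiS fc fa.
Proof. by split; [exists phiS|..]; form_ring. Qed.

Lemma P_slash_1S :
  slashZ k (P_kD d k Delta) [:: (1%:Z, oneM); (1%:Z, SM)] = 0.
Proof.
apply: (poly2_eq0_off (su := [:: 0]) (sv := [:: 0])) => u v; rewrite !inE => u0 v0.
rewrite oneM_mx2 /SM ev2_slashZ !big_cons big_nil addr0.
rewrite (ev2_slash_region acts_one moves_id) ?(ev2_slash_region acts_S moves_S); try by den_neq0.
rewrite /= !mul1r (forms_cocycle _ _ sign_coord_fa sign_coord_fc sign_coord_fa) //.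
- by rewrite region_diag fsbig_set0.
- exact: finite_region.
- exact: finite_region_moves moves_S.
Qed.

(* [fa t], [fc t] and [q_m1 t] are the values of [Q_t] at the cusps [oo], [0] and [-1]. *)
Definition q_m1 (t : hform) : int := let: (a, c, x, y) := t in a + c - 2 * x - s * y.

Lemma q_m1_negf t : q_m1 (negf t) = - q_m1 t.
Proof. by case: t => [[[a c] x] y] /=; ring. Qed.

Definition phiT (t : hform) : hform :=
  let: (a, c, x, y) := t in (a, a + c + 2 * x + s * y, x + a, y).
Definition psiT (t : hform) : hform :=
  let: (a, c, x, y) := t in (a, a + c - 2 * x - s * y, x - a, y).

Lemma acts_T : acts (mx2 1 1 0 1) phiT.
Proof. by acts_ring. Qed.

Lemma moves_T : moves phiT fa q_m1.
Proof. by split; [exists psiT|..]; form_ring. Qed.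

Definition phiTSe (t : hform) : hform :=
  let: (a, c, x, y) := t in (a + c + 2 * x + s * y, a, a + x + s * y, - y).
Definition psiTSe (t : hform) : hform :=
  let: (a, c, x, y) := t in (c, a + c - 2 * x - s * y, x - c + s * y, - y).

Lemma acts_TSe : acts (mx2 (-1) (-1) (-1) 0) phiTSe.
Proof. by acts_ring. Qed.

Lemma moves_TSe : moves phiTSe fc q_m1.
Proof. by split; [exists psiTSe|..]; form_ring. Qed.

Lemma sign_coord_q_m1 : sign_coord level negf q_m1.
Proof. exact: (moves_sign_coord moves_T fa_negf q_m1_negf).2. Qed.

Lemma TSe_mx2 : TM *m SM *m epsM = mx2 (-1) (-1) (-1) 0.
Proof. by rewrite !mulmx2; congr mx2; ring. Qed.

Lemma P_slash_1TSeT :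
  slashZ k (P_kD d k Delta) [:: (1%:Z, oneM); (1%:Z, TM *m SM *m epsM); (- 1%:Z, TM)] = 0.
Proof.
apply: (poly2_eq0_off (su := [:: 0]) (sv := [:: 0])) => u v; rewrite !inE => u0 v0.
rewrite oneM_mx2 TSe_mx2 /TM ev2_slashZ !big_cons big_nil addr0.
rewrite (ev2_slash_region acts_one moves_id) ?(ev2_slash_region acts_TSe moves_TSe)
  ?(ev2_slash_region acts_T moves_T); try by den_neq0.
rewrite /= mulrNz !mulr1z !mul1r mulN1r addrA.
rewrite (forms_cocycle _ _ sign_coord_fa sign_coord_fc sign_coord_q_m1) ?subrr //.
- exact: finite_region.
- exact: finite_region_moves moves_TSe.
Qed.

End Forms.

(** * The case d = 7 *)

Lemma omega7E : omega7 = omega_d 7.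
Proof. by []. Qed.

Lemma omega7_conj : (omega_d 7)^* = 1 - omega_d 7.
Proof. by have [-> _] := @omega_conj_sqr 7 isT; rewrite mulr1z. Qed.

Lemma omega7_sqr : omega_d 7 ^+ 2 = omega_d 7 - 2.
Proof. by have [_ ->] := @omega_conj_sqr 7 isT; rewrite mulr1z mul1r. Qed.

Lemma omega7_neq1 : omega_d 7 - 1 != 0.
Proof.
rewrite subr_eq0; apply/eqP => w1; have := omega7_sqr.
by rewrite w1 expr1n => /eqP; rewrite -subr_eq0 opprB addrC subrK pnatr_eq0.
Qed.

Lemma omega_trace7 : omega_trace 7 = 1. Proof. by []. Qed.
Lemma omega_norm7 : omega_norm 7 = 2. Proof. by []. Qed.

Ltac acts_ring7 := case=> [[[a c] x] y] u v;
  rewrite map_mx2 !mob_num_mx2 !mob_den_mx2 /formv /formH /fb /= !conj_Oel // /Oel;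
  rewrite ?omega_trace7 ?(rmorph0, rmorph1, rmorphN, rmorphB) /= ?omega7_conj;
  rewrite !(intrD, intrM, intrN); ring: omega7_sqr.

Ltac form_ring7 := case=> [[[a c] x] y];
  rewrite /= ?/disc ?/normf ?omega_trace7 ?omega_norm7 /=; try congr (_, _, _, _); ring.

Section OmegaSeven.

Variables (k Delta : nat).
Hypotheses (Delta_gt0 : (0 < Delta)%N) (k_odd : odd k)
  (not_norm : forall x y, normf 7 x y != Delta%:Z).

Let seven_gt0 : (0 < 7)%N := isT.

Local Notation w := (omega_d 7).

(* [q_mw t] is [Q_t(-omega)] and [q_mwi t] is [2 Q_t(-1/conj omega)]. *)
Definition q_mw (t : hform) : int := let: (a, c, x, y) := t in 2 * a - x + 3 * y + c.
Definition q_mwi (t : hform) : int := let: (a, c, x, y) := t in a - x + 3 * y + 2 * c.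

Lemma q_mw_negf t : q_mw (negf t) = - q_mw t.
Proof. by case: t => [[[a c] x] y] /=; ring. Qed.

Lemma q_mwi_negf t : q_mwi (negf t) = - q_mwi t.
Proof. by case: t => [[[a c] x] y] /=; ring. Qed.

Definition phiTw (t : hform) : hform :=
  let: (a, c, x, y) := t in (a, 2 * a + x - 3 * y + c, x + a, y - a).
Definition psiTw (t : hform) : hform :=
  let: (a, c, x, y) := t in (a, 2 * a - x + 3 * y + c, x - a, y + a).

Lemma acts_Tw : acts 7 (mx2 1 w 0 1) phiTw.
Proof. by acts_ring7. Qed.

Lemma moves_Tw : moves 7 phiTw fa q_mw.
Proof. by split; [exists psiTw|..]; form_ring7. Qed.

Definition phiU (t : hform) : hform :=
  let: (a, c, x, y) := t in (a + x - 3 * y + 2 * c, c, x + c, y - c).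
Definition psiU (t : hform) : hform :=
  let: (a, c, x, y) := t in (a - x + 3 * y + 2 * c, c, x - c, y + c).

Lemma acts_U : acts 7 (mx2 (-1) 0 (w - 1) (-1)) phiU.
Proof. by acts_ring7. Qed.

Lemma moves_U : moves 7 phiU q_mwi fc.
Proof. by split; [exists psiU|..]; form_ring7. Qed.

Definition phiV (t : hform) : hform :=
  let: (a, c, x, y) := t in
  (2 * a + x + 4 * y + c, a + x + 4 * y + 2 * c, a + c + 3 * y, - (a + c + x + 3 * y)).
Definition psiV (t : hform) : hform :=
  let: (a, c, x, y) := t in
  (2 * a + c - x + 3 * y, a + 2 * c - x + 3 * y, - x - y, - a - c + x - 2 * y).

Lemma acts_V : acts 7 (mx2 (1 - w) 1 1 w) phiV.
Proof. by acts_ring7. Qed.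

Lemma moves_V : moves 7 phiV q_mw q_mwi.
Proof. by split; [exists psiV|..]; form_ring7. Qed.

Lemma U_mx2 : SM *m invmx TM *m TwM *m SM = mx2 (-1) 0 (omega_d 7 - 1) (-1).
Proof. by rewrite /TwM omega7E /TM invmx2 ?mulmx2; [congr mx2 | ]; ring. Qed.

Lemma V_mx2 : TM *m invmx TwM *m SM *m TwM = mx2 (1 - omega_d 7) 1 1 (omega_d 7).
Proof. by rewrite /TwM omega7E invmx2 ?mulmx2; [congr mx2 | ]; ring: omega7_sqr. Qed.

Lemma P_slash_Tw_relation :
  slashZ k (P_kD 7 k Delta) [:: (1%:Z, oneM); (- 1%:Z, TwM);
                     (- 1%:Z, SM *m invmx TM *m TwM *m SM);
                     (- 1%:Z, TM *m invmx TwM *m SM *m TwM)] = 0.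
Proof.
rewrite U_mx2 V_mx2 oneM_mx2 /TwM omega7E.
apply: (poly2_eq0_off (su := [:: - (-1) / (w - 1); - w / 1])
                      (sv := [:: - (-1)^* / (w - 1)^*; - w^* / 1^*])) => u v.
rewrite !inE !negb_or => /andP[uU uV] /andP[vU vV].
have dU : mob_den (mx2 (-1) 0 (w - 1) (-1)) u != 0 := mob_den_mx2_neq0 _ _ omega7_neq1 uU.
have dU' : mob_den (map_mx conjC (mx2 (-1) 0 (w - 1) (-1))) v != 0.
  by rewrite map_mx2; apply: mob_den_mx2_neq0 vU; rewrite conjC_eq0 omega7_neq1.
have dV : mob_den (mx2 (1 - w) 1 1 w) u != 0 := mob_den_mx2_neq0 _ _ (oner_neq0 _) uV.
have dV' : mob_den (map_mx conjC (mx2 (1 - w) 1 1 w)) v != 0.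
  by rewrite map_mx2; apply: mob_den_mx2_neq0 vV; rewrite conjC_eq0 oner_neq0.
rewrite ev2_slashZ !big_cons big_nil addr0.
rewrite (ev2_slash_region k seven_gt0 Delta_gt0 acts_U moves_U dU dU').
rewrite (ev2_slash_region k seven_gt0 Delta_gt0 acts_V moves_V dV dV').
rewrite (ev2_slash_region k seven_gt0 Delta_gt0 (acts_one seven_gt0) (moves_id 7))
  ?(ev2_slash_region k seven_gt0 Delta_gt0 acts_Tw moves_Tw); try by den_neq0.
rewrite /= !mulrNz !mulr1z !mul1r !mulN1r.
have sc_fa := sign_coord_fa not_norm; have sc_fc := sign_coord_fc not_norm.
have [_ sc_mw] := moves_sign_coord not_norm moves_Tw fa_negf q_mw_negf.
have [sc_mwi _] := moves_sign_coord not_norm moves_U q_mwi_negf fc_negf.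
have fin_Tw := finite_region_moves seven_gt0 Delta_gt0 moves_Tw.
have fin_U := finite_region_moves seven_gt0 Delta_gt0 moves_U.
have fin_V := finite_region_moves seven_gt0 Delta_gt0 moves_V.
have fin_mw_fc := finite_region_trans sc_mwi.2 fin_V fin_U.
rewrite -(forms_cocycle k_odd u v sc_fa sc_mw sc_fc fin_Tw fin_mw_fc).
by rewrite -(forms_cocycle k_odd u v sc_mw sc_mwi sc_fc fin_V fin_U); ring.
Qed.

End OmegaSeven.

Unset Implicit Arguments.
Local Close Scope classical_set_scope.

Theorem proposition2p5 (d k Delta : nat)
  (hd : d \in [:: 1; 2; 3; 7; 11]%N) (hk : odd k) (hDelta : (0 < Delta)%N)
  (hnorm : forall b : algC, in_Od d b -> normK b != Delta%:R) :
  let P := P_kD d k Delta in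
  [/\ subst2 P Yw Xz = P,
      (forall u : algC, unit_Od d u -> subst2 P (cst2 u * Xz) (cst2 u^* * Yw) = P),
      slashZ k P [:: (1%:Z, oneM); (1%:Z, SM)] = 0,
      slashZ k P [:: (1%:Z, oneM); (1%:Z, TM *m SM *m epsM); (- 1%:Z, TM)] = 0
    & d = 7%N ->
      slashZ k P [:: (1%:Z, oneM); (- 1%:Z, TwM);
                     (- 1%:Z, SM *m invmx TM *m TwM *m SM);
                     (- 1%:Z, TM *m invmx TwM *m SM *m TwM)] = 0].
Proof.
have d_gt0 : (0 < d)%N by move: hd; case: (d).
have not_norm := normf_neq d_gt0 hnorm.
split.
- exact: P_conj_sym.
- exact: P_unit_inv.
- exact: P_slash_1S.
- exact: P_slash_1TSeT.
- by move=> d7; subst d; exact: P_slash_Tw_relation.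
Qed.
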